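(* Let $\mathcal{C}$, $Q$, $A_0$, $x_0$ be as in the context (conditions (1Q), (2Q)), and let $\Phi$ be an automorphism of $\mathcal{C}$. Suppose $(t_A:Q(A)\to Q(\Phi(A)))_{A\in\mathrm{Ob}\,\mathcal{C}}$ is a family of $\mathcal{C}$-bijections such that $Q(\Phi(\mu))\circ t_A=t_B\circ Q(\mu)$ for every morphism $\mu:A\to B$. Then there exists a central function $(d_A)_{A\in\mathrm{Ob}\,\mathcal{C}}$ such that for every object $A$, $$t_A=\big(c^{\Phi^{-1}}_{\Phi(A)}\big)^{-1}\circ s^{\Phi}_A\circ d_A,$$ where $c^{\Phi^{-1}}_{\Phi(A)}=s^{\Phi}_{A}\circ s^{\Phi^{-1}}_{\Phi(A)}:Q(\Phi(A))\to Q(\Phi(A))$ and $\big(c^{\Phi^{-1}}_{\Phi(A)}\big)^{-1}$ denotes the inverse of this injective map on its image.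
   Context: (1Q): for every object $A$ and every $a\in Q(A)$ there is exactly one morphism $\alpha^A_a:A_0\to A$ with $Q(\alpha^A_a)(x_0)=a$. (2Q): for every object $A$ there is a morphism $A\to A_0$ whose image under $Q$ is surjective. $Q$ is faithful. A $\mathcal{C}$-bijection $s:Q(A)\to Q(B)$ is an injective map such that for all morphisms $\alpha_1,\alpha_2:B\to C$, $Q(\alpha_1)\circ s=Q(\alpha_2)\circ s$ implies $\alpha_1=\alpha_2$. A central function is a family of $\mathcal{C}$-bijections $d_A:Q(A)\to Q(A)$ with $d_B\circ Q(\mu)=Q(\mu)\circ d_A$ for all morphisms $\mu:A\to B$. Main function: for an automorphism $\Psi$ of $\mathcal{C}$ fix a morphism $\eta^{\Psi}_0:\Psi^{-1}(A_0)\to A_0$ with $Q(\eta^\Psi_0)$ surjective (taken to be the identity if $\Psi(A_0)=A_0$), put $\eta^\Psi=\Psi(\eta^\Psi_0):A_0\to\Psi(A_0)$, and define $s^\Psi_A:Q(A)\to Q(\Psi(A))$ by $s^\Psi_A(a)=Q(\Psi(\alpha^A_a)\circ\eta^\Psi)(x_0)$. This is applied with $\Psi=\Phi$ and $\Psi=\Phi^{-1}$. *)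

Set Implicit Arguments.
Unset Strict Implicit.

Record Category := {
  Ob : Type;
  Hom : Ob -> Ob -> Type;
  idm : forall A, Hom A A;
  comp : forall A B C, Hom B C -> Hom A B -> Hom A C;
  comp_id_l : forall A B (f : Hom A B), comp (idm B) f = f;
  comp_id_r : forall A B (f : Hom A B), comp f (idm A) = f;
  comp_assoc : forall A B C D (h : Hom C D) (g : Hom B C) (f : Hom A B),
      comp h (comp g f) = comp (comp h g) f
}.
Arguments Hom : clear implicits.
Arguments idm {c} A.
Arguments comp {c A B C} _ _.

Record SetFunctor (C : Category) := {
  Qob :> Ob C -> Type;
  Qmap : forall A B, Hom C A B -> Qob A -> Qob B;
  Qmap_id : forall A x, Qmap (idm A) x = x;
  Qmap_comp : forall A B D (g : Hom C B D) (f : Hom C A B) x,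
      Qmap (comp g f) x = Qmap g (Qmap f x)
}.
Arguments Qmap {C} s {A B} _ _.

Record Functor (C : Category) := {
  Fo : Ob C -> Ob C;
  Fm : forall A B, Hom C A B -> Hom C (Fo A) (Fo B);
  Fm_id : forall A, Fm (idm A) = idm (Fo A);
  Fm_comp : forall A B D (g : Hom C B D) (f : Hom C A B),
      Fm (comp g f) = comp (Fm g) (Fm f)
}.
Arguments Fo {C} f0 _.
Arguments Fm {C} f0 {A B} _.

Definition castHom (C : Category) (A B A' B' : Ob C) (eA : A = A') (eB : B = B')
  (f : Hom C A B) : Hom C A' B' :=
  match eA in _ = X, eB in _ = Y return Hom C X Y with
  | eq_refl, eq_refl => f end.

(* An automorphism of C: a functor [fwd] with a two-sided inverse functor [bwd]
   (strictly, on objects and on morphisms). *)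
Record Automorphism (C : Category) := {
  fwd : Functor C;
  bwd : Functor C;
  fwd_bwd_ob : forall A, Fo fwd (Fo bwd A) = A;
  bwd_fwd_ob : forall A, Fo bwd (Fo fwd A) = A;
  fwd_bwd_hom : forall A B (f : Hom C A B),
      castHom (fwd_bwd_ob A) (fwd_bwd_ob B) (Fm fwd (Fm bwd f)) = f;
  bwd_fwd_hom : forall A B (f : Hom C A B),
      castHom (bwd_fwd_ob A) (bwd_fwd_ob B) (Fm bwd (Fm fwd f)) = f
}.

Section Defs.
Variables (C : Category) (Q : SetFunctor C).

Definition castQ (A B : Ob C) (e : A = B) (x : Q A) : Q B :=
  eq_rect A (fun X => Q X) x B e.

Definition Q_faithful : Prop :=
  forall A B (f g : Hom C A B), (forall x, Qmap Q f x = Qmap Q g x) -> f = g.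

Definition C_bijection (A B : Ob C) (s : Q A -> Q B) : Prop :=
  (forall x y, s x = s y -> x = y) /\
  (forall D (a1 a2 : Hom C B D),
      (forall x, Qmap Q a1 (s x) = Qmap Q a2 (s x)) -> a1 = a2).

Definition central_function (d : forall A, Q A -> Q A) : Prop :=
  (forall A, C_bijection (d A)) /\
  (forall A B (mu : Hom C A B) x, d B (Qmap Q mu x) = Qmap Q mu (d A x)).

(* The main function s^Psi_A(a) = Q(Psi(alpha^A_a) o eta^Psi)(x0), where
   eta^Psi = Psi(eta0) with eta0 : Psi^{-1}(A0) -> A0, and the domain
   Psi(Psi^{-1}(A0)) of eta^Psi is identified with A0 via [e]. *)
Definition main_fn (A0 : Ob C) (x0 : Q A0) (alpha : forall A, Q A -> Hom C A0 A)
  (Psi : Functor C) (PsiinvA0 : Ob C) (e : Fo Psi PsiinvA0 = A0)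
  (eta0 : Hom C PsiinvA0 A0) (A : Ob C) (a : Q A) : Q (Fo Psi A) :=
  Qmap Q (Fm Psi (alpha A a)) (Qmap Q (Fm Psi eta0) (castQ (eq_sym e) x0)).

(* Admissible choice of eta0 : Psi^{-1}(A0) -> A0: Q(eta0) surjective, and
   eta0 is the identity when Psi^{-1}(A0) = A0 (equivalently Psi(A0) = A0). *)
Definition admissible_eta0 (A0 : Ob C) (PsiinvA0 : Ob C) (eta0 : Hom C PsiinvA0 A0)
  : Prop :=
  (forall b : Q A0, exists a : Q PsiinvA0, Qmap Q eta0 a = b) /\
  (PsiinvA0 = A0 ->
     exists h : PsiinvA0 = A0,
       eta0 = eq_rect PsiinvA0 (fun X => Hom C PsiinvA0 X) (idm PsiinvA0) A0 h).

End Defs.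

Arguments castQ {C} Q {A B} e x.
Arguments Q_faithful {C} Q.
Arguments C_bijection {C} Q {A B} s.
Arguments central_function {C} Q d.
Arguments main_fn {C} Q {A0} x0 alpha Psi {PsiinvA0} e eta0 A a.
Arguments admissible_eta0 {C} Q {A0 PsiinvA0} eta0.


Set Implicit Arguments.

(* Put d_A := s^{Phi^-1}_{Phi(A)} o t_A (transported back from Phi^-1(Phi(A)) to A).
   Then c_{Phi(A)} o t_A = s^Phi_A o d_A holds by construction, and it remains to see
   that d is central.  The main function s^Psi is natural (because alpha^B_{Q(mu) b}
   = mu o alpha^A_b by uniqueness in (1Q)) and injective (because Psi is faithful and
   Q(eta_0) is onto), so d is natural and injective as a composite of such maps.
   Finally every natural injective endomorphism d of a faithful Q is a C-bijection:
   Q(a1) o d = Q(a2) o d gives d o Q(a1) = d o Q(a2), hence Q(a1) = Q(a2). *)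

Section Casts.
Variables (C : Category) (Q : SetFunctor C).

Lemma castQ_Qmap (X Y X' Y' : Ob C) (eX : X = X') (eY : Y = Y') (g : Hom C X Y) (y : Q X) :
  castQ Q eY (Qmap Q g y) = Qmap Q (castHom eX eY g) (castQ Q eX y).
Proof. destruct eX, eY; reflexivity. Qed.

Lemma Qmap_castQ_sym (X Y Z : Ob C) (e : X = Y) (g : Hom C X Z) (y : Q Y) :
  Qmap Q g (castQ Q (eq_sym e) y) = Qmap Q (castHom e eq_refl g) y.
Proof. destruct e; reflexivity. Qed.

Lemma castQ_inj (X Y : Ob C) (e : X = Y) (x y : Q X) :
  castQ Q e x = castQ Q e y -> x = y.
Proof. destruct e; auto. Qed.

Lemma castHom_inj (X Y X' Y' : Ob C) (eX : X = X') (eY : Y = Y') (f g : Hom C X Y) :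
  castHom eX eY f = castHom eX eY g -> f = g.
Proof. destruct eX, eY; auto. Qed.

End Casts.

Lemma Fm_bwd_inj (C : Category) (Phi : Automorphism C) (A B : Ob C) (f g : Hom C A B) :
  Fm (bwd Phi) f = Fm (bwd Phi) g -> f = g.
Proof.
  intros Hfg.
  rewrite <- (fwd_bwd_hom Phi f), <- (fwd_bwd_hom Phi g), Hfg.
  reflexivity.
Qed.

Section CentralFunction.
Variables (C : Category) (Q : SetFunctor C).
Hypothesis Q_faith : Q_faithful Q.

Lemma central_function_of_natural_inj (d : forall A, Q A -> Q A) :
  (forall A (x y : Q A), d A x = d A y -> x = y) ->
  (forall A B (mu : Hom C A B) x, d B (Qmap Q mu x) = Qmap Q mu (d A x)) ->
  central_function Q d.
Proof.
  intros d_inj d_nat.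
  split; [|exact d_nat].
  intros A; split; [apply d_inj|].
  intros D a1 a2 Ha.
  apply Q_faith; intros x.
  apply d_inj.
  rewrite !d_nat.
  apply Ha.
Qed.

End CentralFunction.

Section MainFunction.
Variables (C : Category) (Q : SetFunctor C) (A0 : Ob C) (x0 : Q A0)
  (alpha : forall A, Q A -> Hom C A0 A).
Hypothesis alpha_spec : forall A (a : Q A), Qmap Q (alpha A a) x0 = a.
Hypothesis alpha_uniq :
  forall A (a : Q A) (f : Hom C A0 A), Qmap Q f x0 = a -> f = alpha A a.

Lemma eq_hom_at_x0 (A : Ob C) (f g : Hom C A0 A) :
  Qmap Q f x0 = Qmap Q g x0 -> f = g.
Proof.
  intros Hfg.
  transitivity (alpha A (Qmap Q g x0)).
  - exact (alpha_uniq _ _ Hfg).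
  - symmetry; exact (alpha_uniq _ _ eq_refl).
Qed.

Lemma alpha_Qmap (A B : Ob C) (mu : Hom C A B) (a : Q A) :
  alpha B (Qmap Q mu a) = comp mu (alpha A a).
Proof.
  symmetry; apply alpha_uniq.
  rewrite Qmap_comp, alpha_spec.
  reflexivity.
Qed.

Variables (Psi : Functor C) (PsiinvA0 : Ob C) (e : Fo Psi PsiinvA0 = A0)
  (eta0 : Hom C PsiinvA0 A0).

Let s := main_fn Q x0 alpha Psi e eta0.

Lemma main_fn_natural (A B : Ob C) (mu : Hom C A B) (a : Q A) :
  s B (Qmap Q mu a) = Qmap Q (Fm Psi mu) (s A a).
Proof.
  unfold s, main_fn.
  rewrite alpha_Qmap, Fm_comp, Qmap_comp.
  reflexivity.
Qed.

Hypothesis Psi_faithful : forall A B (f g : Hom C A B), Fm Psi f = Fm Psi g -> f = g.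
Hypothesis eta0_onto : forall b : Q A0, exists a, Qmap Q eta0 a = b.

Lemma main_fn_inj (A : Ob C) (a a' : Q A) : s A a = s A a' -> a = a'.
Proof.
  unfold s, main_fn.
  rewrite <- !Qmap_comp, <- !Fm_comp, !Qmap_castQ_sym.
  intros Hx0.
  assert (Heta : comp (alpha A a) eta0 = comp (alpha A a') eta0).
  { apply Psi_faithful, (castHom_inj _ e eq_refl), eq_hom_at_x0, Hx0. }
  destruct (eta0_onto x0) as [y Hy].
  rewrite <- (alpha_spec A a), <- (alpha_spec A a'), <- Hy, <- !Qmap_comp, Heta.
  reflexivity.
Qed.

End MainFunction.

Section PullBack.
Variables (C : Category) (Q : SetFunctor C) (Phi : Automorphism C)
  (u : forall A, Q A -> Q (Fo (bwd Phi) A)) (t : forall A, Q A -> Q (Fo (fwd Phi) A)).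

Definition pull_back (A : Ob C) (a : Q A) : Q A :=
  castQ Q (bwd_fwd_ob Phi A) (u (Fo (fwd Phi) A) (t A a)).

Lemma pull_back_natural :
  (forall A B (mu : Hom C A B) b, u B (Qmap Q mu b) = Qmap Q (Fm (bwd Phi) mu) (u A b)) ->
  (forall A B (mu : Hom C A B) a, Qmap Q (Fm (fwd Phi) mu) (t A a) = t B (Qmap Q mu a)) ->
  forall A B (mu : Hom C A B) a, pull_back B (Qmap Q mu a) = Qmap Q mu (pull_back A a).
Proof.
  intros u_nat t_nat A B mu a.
  unfold pull_back.
  rewrite <- t_nat, u_nat, (castQ_Qmap Q (bwd_fwd_ob Phi A)), bwd_fwd_hom.
  reflexivity.
Qed.

Lemma pull_back_inj :
  (forall A (b b' : Q A), u A b = u A b' -> b = b') ->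
  (forall A (a a' : Q A), t A a = t A a' -> a = a') ->
  forall A (a a' : Q A), pull_back A a = pull_back A a' -> a = a'.
Proof.
  intros u_inj t_inj A a a' Ha.
  apply t_inj, u_inj, (castQ_inj Q (bwd_fwd_ob Phi A)), Ha.
Qed.

End PullBack.

Theorem proposition1 (C : Category) (Q : SetFunctor C) (A0 : Ob C) (x0 : Q A0)
  (* (1Q), with alpha A a the unique morphism A0 -> A sending x0 to a *)
  (alpha : forall A, Q A -> Hom C A0 A)
  (alpha_spec : forall A (a : Q A), Qmap Q (alpha A a) x0 = a)
  (alpha_uniq : forall A (a : Q A) (f : Hom C A0 A), Qmap Q f x0 = a -> f = alpha A a)
  (* (2Q) *)
  (H2Q : forall A, exists f : Hom C A A0, forall b : Q A0, exists a : Q A, Qmap Q f a = b)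
  (Hfaith : Q_faithful Q)
  (Phi : Automorphism C)
  (* eta^Phi_0 : Phi^{-1}(A0) -> A0 *)
  (etaP0 : Hom C (Fo (bwd Phi) A0) A0)
  (HetaP0 : admissible_eta0 Q etaP0)
  (* eta^{Phi^{-1}}_0 : Phi(A0) -> A0 *)
  (etaN0 : Hom C (Fo (fwd Phi) A0) A0)
  (HetaN0 : admissible_eta0 Q etaN0)
  (t : forall A, Q A -> Q (Fo (fwd Phi) A))
  (Ht_bij : forall A, C_bijection Q (t A))
  (Ht_nat : forall A B (mu : Hom C A B) (x : Q A),
      Qmap Q (Fm (fwd Phi) mu) (t A x) = t B (Qmap Q mu x)) :
  let sP := main_fn Q x0 alpha (fwd Phi) (fwd_bwd_ob Phi A0) etaP0 in
  let sN := main_fn Q x0 alpha (bwd Phi) (bwd_fwd_ob Phi A0) etaN0 in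
  (* c_{Phi(A)} = s^Phi_A o s^{Phi^{-1}}_{Phi(A)}, with Phi^{-1}(Phi(A)) = A *)
  let c := fun A (b : Q (Fo (fwd Phi) A)) =>
             sP A (castQ Q (bwd_fwd_ob Phi A) (sN (Fo (fwd Phi) A) b)) in
  exists d : forall A, Q A -> Q A,
    central_function Q d /\
    (* t_A = c^{-1} o s^Phi_A o d_A  (c_A is injective) *)
    forall A (a : Q A), c A (t A a) = sP A (d A a).
Proof.
  intros sP sN c.
  exists (pull_back Q Phi sN t); split; [|reflexivity].
  apply central_function_of_natural_inj; [exact Hfaith | |].
  - apply pull_back_inj.
    + apply main_fn_inj; [exact alpha_spec | exact alpha_uniq | apply Fm_bwd_inj |].
      apply HetaN0.
    + intros A; apply Ht_bij.
  - apply pull_back_natural; [|exact Ht_nat].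
    apply main_fn_natural; [exact alpha_spec | exact alpha_uniq].
Qed.
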